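(* In the setting described in the context (in particular, the modified 4-player stage game is $\alpha$-strongly monotone for some $\alpha>0$, so every stage game has a unique RQE), suppose the risk-averse quantal-response Bellman operator $\mathcal{T}$ has a unique fixed point $\mathbf{Q}^*$. Define the Markov policy $\pi^*$ state-wise by letting $\pi^*(\cdot\mid s)$ be the unique RQE of the stage game with payoff matrix pair $\mathbf{Q}^*(s,\cdot)$. Then $\pi^*$ is a stationary Markov RQE of the Markov game.
   Context: A discounted two-player Markov game has a finite state space $\mathcal{S}$, finite action sets $\mathcal{A}_1,\mathcal{A}_2$ with $\mathcal{A}=\mathcal{A}_1\times\mathcal{A}_2$, deterministic rewards $r_i:\mathcal{S}\times\mathcal{A}\to[0,1]$, discount factor $\gamma\in[0,1)$ and transition kernel $P(\cdot\mid s,\mathbf{a})\in\Delta_{\mathcal{S}}$; $-i$ denotes the other player, $\Delta_n$ the probability simplex in $\mathbb{R}^n$. For each $i$ fix $\epsilon_i>0$, a differentiable strictly convex $\nu_i$ on (a neighbourhood of) $\Delta_{|\mathcal{A}_i|}$, a differentiable $D_i:\Delta_{|\mathcal{A}_{-i}|}\times\Delta_{|\mathcal{A}_{-i}|}\to\mathbb{R}$ convex in its first argument, and an environment penalty $D_i^{\mathrm{env}}:\Delta_{\mathcal{S}}\times\Delta_{\mathcal{S}}\to[0,\infty)$. Stage games: for $\mathbf{R}=(R_1,R_2)$, $R_i\in\mathbb{R}^{|\mathcal{A}_i|\times|\mathcal{A}_{-i}|}$, let $f_i(\pi_i,\pi_{-i};R_i)=\sup_{p_i\in\Delta_{|\mathcal{A}_{-i}|}}[-\pi_i^TR_ip_i-D_i(p_i,\pi_{-i})]+\epsilon_i\nu_i(\pi_i)$;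 an RQE is $(\pi_1^*,\pi_2^* )$ with $f_i(\pi_i^*,\pi_{-i}^*;R_i)\le f_i(\pi_i,\pi_{-i}^*;R_i)$ for all $\pi_i$, $i=1,2$, and for the unique RQE $\texttt{RQE}_i(\mathbf{R}):=f_i(\pi_i^*,\pi_{-i}^*;R_i)$. The modified 4-player game with $z=(\pi_1,\pi_2,p_1,p_2)\in\mathcal{Z}=\Delta_{|\mathcal{A}_1|}\times\Delta_{|\mathcal{A}_2|}\times\Delta_{|\mathcal{A}_2|}\times\Delta_{|\mathcal{A}_1|}$ has gradient operator $F(z;\mathbf{R})=(-R_1p_1+\epsilon_1\nabla\nu_1(\pi_1),\,-R_2p_2+\epsilon_2\nabla\nu_2(\pi_2),\,R_1^T\pi_1+\nabla_{p_1}D_1(p_1,\pi_2),\,R_2^T\pi_2+\nabla_{p_2}D_2(p_2,\pi_1))$ and is $\alpha$-strongly monotone if $(z-z')^T(F(z;\mathbf{R})-F(z';\mathbf{R}))\ge\alpha\|z-z'\|_2^2$ for all $z,z'$ (independent of $\mathbf{R}$). For a $Q$ function pair $\mathbf{Q}=(Q_1,Q_2)$, $Q_i:\mathcal{S}\times\mathcal{A}\to\mathbb{R}$, $\mathbf{Q}(s,\cdot)$ is the stage payoff pair with $[Q_i(s,\cdot)]_{mn}=Q_i(s,(a_i=m,a_{-i}=n))$, and $(\mathcal{T}\mathbf{Q})_i(s,\mathbf{a})=r_i(s,\mathbf{a})+\gamma\inf_{\widetilde P\in\Delta_{\mathcal{S}}}\{-\mathbb{E}_{s'\sim\widetilde P}[\texttt{RQE}_i(\mathbf{Q}(s',\cdot))]+D_i^{\mathrm{env}}(\widetilde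 P,P(\cdot\mid s,\mathbf{a}))\}$. For a Markov policy pair $\pi=(\pi_1,\pi_2)$, $\pi_i:\mathcal{S}\to\Delta_{|\mathcal{A}_i|}$, the value and $Q$ functions $V_i^{\epsilon_i,\pi}$, $Q_i^{\epsilon_i,\pi}$ are defined jointly by $V_i^{\epsilon_i,\pi}(s)=-f_i(\pi_i(s),\pi_{-i}(s);Q_i^{\epsilon_i,\pi}(s,\cdot))$ and $Q_i^{\epsilon_i,\pi}(s,\mathbf{a})=r_i(s,\mathbf{a})+\gamma\inf_{\widetilde P\in\Delta_{\mathcal{S}}}\{\mathbb{E}_{s'\sim\widetilde P}V_i^{\epsilon_i,\pi}(s')+D_i^{\mathrm{env}}(\widetilde P,P(\cdot\mid s,\mathbf{a}))\}$. A pair $\pi^*$ is a stationary Markov RQE if for both $i$ and all $s\in\mathcal{S}$, $V_i^{\epsilon_i,\pi^*}(s)\ge V_i^{\epsilon_i,(\pi_i,\pi_{-i}^* )}(s)$ for every Markov policy $\pi_i:\mathcal{S}\to\Delta_{|\mathcal{A}_i|}$. *)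

From HB Require Import structures.
From mathcomp Require Import all_boot all_order all_algebra.
From mathcomp Require Import all_classical all_reals all_analysis.
Set Implicit Arguments. Unset Strict Implicit. Unset Printing Implicit Defensive.
Import Order.TTheory GRing.Theory Num.Theory.
Import numFieldNormedType.Exports.
Local Open Scope classical_set_scope.
Local Open Scope ring_scope.

Section Defs.
Variable R : realType.

Definition simplex (n : nat) : set 'rV[R]_n :=
  [set p | (forall j, 0 <= p 0 j) /\ \sum_j p 0 j = 1].
Arguments simplex : clear implicits.

Definition distr (S : finType) : set (S -> R) :=
  [set p | (forall s, 0 <= p s) /\ \sum_s p s = 1].
Arguments distr : clear implicits.

Definition grad (n : nat) (f : 'rV[R]_n -> R) (x : 'rV[R]_n) : 'rV[R]_n :=
  \row_j ('d f x) (delta_mx 0 j).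

Definition dotv (n : nat) (u v : 'rV[R]_n) : R := \sum_j u 0 j * v 0 j.

Record stage_params (m1 m2 : nat) := StageParams {
  eps1 : R; eps2 : R;
  nu1 : 'rV[R]_m1 -> R; nu2 : 'rV[R]_m2 -> R;
  D1 : 'rV[R]_m2 -> 'rV[R]_m2 -> R;
  D2 : 'rV[R]_m1 -> 'rV[R]_m1 -> R }.

Definition fval (m n : nat) (eps : R) (nu : 'rV[R]_m -> R)
  (D : 'rV[R]_n -> 'rV[R]_n -> R) (pi : 'rV[R]_m) (pio : 'rV[R]_n)
  (Rm : 'M[R]_(m, n)) : R :=
  sup [set - (pi *m Rm *m p^T) 0 0 - D p pio | p in simplex n] + eps * nu pi.

Definition f1 m1 m2 (G : stage_params m1 m2) pi1 pi2 (R1 : 'M[R]_(m1, m2)) :=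
  fval (eps1 G) (nu1 G) (D1 G) pi1 pi2 R1.
Definition f2 m1 m2 (G : stage_params m1 m2) pi2 pi1 (R2 : 'M[R]_(m2, m1)) :=
  fval (eps2 G) (nu2 G) (D2 G) pi2 pi1 R2.

Definition isRQE m1 m2 (G : stage_params m1 m2)
  (R1 : 'M[R]_(m1, m2)) (R2 : 'M[R]_(m2, m1)) (pi1 : 'rV[R]_m1) (pi2 : 'rV[R]_m2) :=
  [/\ simplex m1 pi1, simplex m2 pi2,
      (forall p1, simplex m1 p1 -> f1 G pi1 pi2 R1 <= f1 G p1 pi2 R1) &
      (forall p2, simplex m2 p2 -> f2 G pi2 pi1 R2 <= f2 G p2 pi1 R2)].

(* The RQE of the stage game (chosen; it is unique under strong monotonicity).
   If none exists a junk value is returned (never used under the hypotheses). *)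
Definition rqe_pair m1 m2 (G : stage_params m1 m2)
  (R1 : 'M[R]_(m1, m2)) (R2 : 'M[R]_(m2, m1)) : 'rV[R]_m1 * 'rV[R]_m2 :=
  match pselect (exists z : 'rV[R]_m1 * 'rV[R]_m2, isRQE G R1 R2 z.1 z.2) with
  | left H => proj1_sig (cid H)
  | right _ => (0, 0)
  end.

Definition RQE1 m1 m2 (G : stage_params m1 m2) R1 R2 : R :=
  f1 G (rqe_pair G R1 R2).1 (rqe_pair G R1 R2).2 R1.
Definition RQE2 m1 m2 (G : stage_params m1 m2) R1 R2 : R :=
  f2 G (rqe_pair G R1 R2).2 (rqe_pair G R1 R2).1 R2.

(* Gradient operator F of the modified 4-player game, z = (pi1, pi2, p1, p2). *)
Definition Fop m1 m2 (G : stage_params m1 m2)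
  (R1 : 'M[R]_(m1, m2)) (R2 : 'M[R]_(m2, m1))
  (pi1 : 'rV[R]_m1) (pi2 : 'rV[R]_m2) (p1 : 'rV[R]_m2) (p2 : 'rV[R]_m1) :
  'rV[R]_m1 * 'rV[R]_m2 * 'rV[R]_m2 * 'rV[R]_m1 :=
  ( - (p1 *m R1^T) + eps1 G *: grad (nu1 G) pi1,
    - (p2 *m R2^T) + eps2 G *: grad (nu2 G) pi2,
    pi1 *m R1 + grad (fun x => D1 G x pi2) p1,
    pi2 *m R2 + grad (fun x => D2 G x pi1) p2).

Definition strongly_monotone m1 m2 (G : stage_params m1 m2) (alpha : R) :=
  forall (R1 : 'M[R]_(m1, m2)) (R2 : 'M[R]_(m2, m1))
         pi1 pi2 p1 p2 pi1' pi2' p1' p2',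
  simplex m1 pi1 -> simplex m2 pi2 -> simplex m2 p1 -> simplex m1 p2 ->
  simplex m1 pi1' -> simplex m2 pi2' -> simplex m2 p1' -> simplex m1 p2' ->
  let: (F1, F2, F3, F4) := Fop G R1 R2 pi1 pi2 p1 p2 in
  let: (F1', F2', F3', F4') := Fop G R1 R2 pi1' pi2' p1' p2' in
  alpha * (dotv (pi1 - pi1') (pi1 - pi1') + dotv (pi2 - pi2') (pi2 - pi2')
           + dotv (p1 - p1') (p1 - p1') + dotv (p2 - p2') (p2 - p2'))
  <= dotv (pi1 - pi1') (F1 - F1') + dotv (pi2 - pi2') (F2 - F2')
     + dotv (p1 - p1') (F3 - F3') + dotv (p2 - p2') (F4 - F4').

Record markov_params (S : finType) (m1 m2 : nat) := MarkovParams {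
  rew1 : S -> 'I_m1 -> 'I_m2 -> R;
  rew2 : S -> 'I_m1 -> 'I_m2 -> R;
  gamma : R;
  trans : S -> 'I_m1 -> 'I_m2 -> S -> R;
  Denv1 : (S -> R) -> (S -> R) -> R;
  Denv2 : (S -> R) -> (S -> R) -> R }.

Definition Qmat1 (S : finType) m1 m2 (Q : S -> 'I_m1 -> 'I_m2 -> R) s
  : 'M[R]_(m1, m2) := \matrix_(a1 < m1, a2 < m2) Q s a1 a2.
Definition Qmat2 (S : finType) m1 m2 (Q : S -> 'I_m1 -> 'I_m2 -> R) s
  : 'M[R]_(m2, m1) := \matrix_(a2 < m2, a1 < m1) Q s a1 a2.

Definition expect (S : finType) (p : S -> R) (V : S -> R) : R :=
  \sum_s p s * V s.

Definition robust_exp (S : finType) (Denv : (S -> R) -> (S -> R) -> R)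
  (P0 : S -> R) (W : S -> R) : R :=
  inf [set expect Pt W + Denv Pt P0 | Pt in distr S].

Definition bellman (S : finType) m1 m2 (G : stage_params m1 m2)
  (M : markov_params S m1 m2) (Q1 Q2 : S -> 'I_m1 -> 'I_m2 -> R) :
  (S -> 'I_m1 -> 'I_m2 -> R) * (S -> 'I_m1 -> 'I_m2 -> R) :=
  (fun s a1 a2 => rew1 M s a1 a2 + gamma M *
     robust_exp (Denv1 M) (trans M s a1 a2)
       (fun s' => - RQE1 G (Qmat1 Q1 s') (Qmat2 Q2 s')),
   fun s a1 a2 => rew2 M s a1 a2 + gamma M *
     robust_exp (Denv2 M) (trans M s a1 a2)
       (fun s' => - RQE2 G (Qmat1 Q1 s') (Qmat2 Q2 s'))).

Definition is_VQ1 (S : finType) m1 m2 (G : stage_params m1 m2)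
  (M : markov_params S m1 m2) (pi1 : S -> 'rV[R]_m1) (pi2 : S -> 'rV[R]_m2)
  (V : S -> R) (Q : S -> 'I_m1 -> 'I_m2 -> R) :=
  (forall s, V s = - f1 G (pi1 s) (pi2 s) (Qmat1 Q s)) /\
  (forall s a1 a2, Q s a1 a2 =
     rew1 M s a1 a2 + gamma M * robust_exp (Denv1 M) (trans M s a1 a2) V).

Definition is_VQ2 (S : finType) m1 m2 (G : stage_params m1 m2)
  (M : markov_params S m1 m2) (pi1 : S -> 'rV[R]_m1) (pi2 : S -> 'rV[R]_m2)
  (V : S -> R) (Q : S -> 'I_m1 -> 'I_m2 -> R) :=
  (forall s, V s = - f2 G (pi2 s) (pi1 s) (Qmat2 Q s)) /\
  (forall s a1 a2, Q s a1 a2 =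
     rew2 M s a1 a2 + gamma M * robust_exp (Denv2 M) (trans M s a1 a2) V).

Definition markov_policy (S : finType) (m : nat) (pi : S -> 'rV[R]_m) :=
  forall s, simplex m (pi s).

Definition markov_RQE (S : finType) m1 m2 (G : stage_params m1 m2)
  (M : markov_params S m1 m2) (pi1 : S -> 'rV[R]_m1) (pi2 : S -> 'rV[R]_m2) :=
  markov_policy pi1 /\ markov_policy pi2 /\
  (forall pi1', markov_policy pi1' ->
     forall V Q V' Q', is_VQ1 G M pi1 pi2 V Q -> is_VQ1 G M pi1' pi2 V' Q' ->
     forall s, V' s <= V s) /\
  (forall pi2', markov_policy pi2' ->
     forall V Q V' Q', is_VQ2 G M pi1 pi2 V Q -> is_VQ2 G M pi1 pi2' V' Q' ->
     forall s, V' s <= V s).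

Definition strictly_convex_on (n : nat) (A : set 'rV[R]_n) (g : 'rV[R]_n -> R) :=
  forall x y t, A x -> A y -> x != y -> 0 < t < 1 ->
    g (t *: x + (1 - t) *: y) < t * g x + (1 - t) * g y.

Definition convex_first_on (n : nat) (A : set 'rV[R]_n) (D : 'rV[R]_n -> 'rV[R]_n -> R) :=
  forall x y q t, A x -> A y -> A q -> 0 <= t <= 1 ->
    D (t *: x + (1 - t) *: y) q <= t * D x q + (1 - t) * D y q.

Definition diff_nbhd (n : nat) (A : set 'rV[R]_n) (g : 'rV[R]_n -> R) :=
  exists U : set 'rV[R]_n, [/\ open U, A `<=` U & forall x, U x -> differentiable g x].

Definition diff_on2 (n : nat) (A : set 'rV[R]_n) (D : 'rV[R]_n -> 'rV[R]_n -> R) :=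
  forall p q, A p -> A q ->
    differentiable (fun z : 'rV[R]_n * 'rV[R]_n => D z.1 z.2) (p, q).

End Defs.
Arguments simplex : clear implicits.
Arguments distr : clear implicits.

From HB Require Import structures.
From mathcomp Require Import all_boot all_order all_algebra.
From mathcomp Require Import all_classical all_reals all_analysis.
From mathcomp Require Import ring lra.
Import Order.TTheory GRing.Theory Num.Theory.
Import numFieldNormedType.Exports.
Local Open Scope classical_set_scope.
Local Open Scope ring_scope.
Set Implicit Arguments. Unset Strict Implicit. Unset Printing Implicit Defensive.

(** Strong monotonicity of the four-player operator F makes every stage RQE unique: an RQE
    (pi1, pi2) together with the adversaries' worst-case responses (p1, p2) solves the
    variational inequality of F on the product of simplices, and two solutions of a strongly
    monotone variational inequality coincide.  For the outer players this is an envelope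
    argument: strong monotonicity in p makes the adversary's response Lipschitz in pi, so
    f_i(., pi_{-i}) has first-order expansion given by the response at pi_i.
    Consequently the Bellman fixed point Q* and the values V*(s) = -f_i(pi*(s); Q*(s, .))
    solve the policy-evaluation equations of pi*.  The stage map Q |-> f_i(pi_i, pi_{-i}; Q) is antitone
    and nonexpansive, so by a discounted maximum principle policy evaluation has a unique
    solution, and a unilateral deviation, which cannot decrease f_i at Q* because pi*_i is a
    best response there, cannot increase the value. *)

Section DotProduct.
Variables (R : realType) (n : nat).
Implicit Types u v w : 'rV[R]_n.

Lemma dotvC u v : dotv u v = dotv v u.
Proof. by apply: eq_bigr => j _; rewrite mulrC. Qed.

Lemma dotvDr u v w : dotv u (v + w) = dotv u v + dotv u w.
Proof. by rewrite /dotv -big_split; apply: eq_bigr => j _; rewrite mxE mulrDr. Qed.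

Lemma dotvDl u v w : dotv (v + w) u = dotv v u + dotv w u.
Proof. by rewrite dotvC dotvDr !(dotvC u). Qed.

Lemma dotvNr u v : dotv u (- v) = - dotv u v.
Proof. by rewrite /dotv -sumrN; apply: eq_bigr => j _; rewrite mxE mulrN. Qed.

Lemma dotvNl u v : dotv (- u) v = - dotv u v.
Proof. by rewrite dotvC dotvNr dotvC. Qed.

Lemma dotvBr u v w : dotv u (v - w) = dotv u v - dotv u w.
Proof. by rewrite dotvDr dotvNr. Qed.

Lemma dotvZr a u v : dotv u (a *: v) = a * dotv u v.
Proof. by rewrite /dotv mulr_sumr; apply: eq_bigr => j _; rewrite mxE mulrCA. Qed.

Lemma dotvZl a u v : dotv (a *: u) v = a * dotv u v.
Proof. by rewrite dotvC dotvZr dotvC. Qed.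

Lemma dotv0l u : dotv 0 u = 0.
Proof. by rewrite /dotv big1 // => j _; rewrite mxE mul0r. Qed.

Lemma dotv_ge0 u : 0 <= dotv u u.
Proof. by apply: sumr_ge0 => j _; rewrite -expr2 sqr_ge0. Qed.

Lemma dotv_eq0 u : (dotv u u == 0) = (u == 0).
Proof.
apply/idP/eqP => [|->]; last by rewrite dotv0l.
rewrite psumr_eq0 => [/allP u0|j _]; last by rewrite -expr2 sqr_ge0.
apply/rowP => j; rewrite mxE.
by have := u0 j (mem_index_enum j); rewrite implyTb mulf_eq0 orbb => /eqP.
Qed.

Lemma dotv_VI2_le0 (x y Fx Fy : 'rV[R]_n) :
  0 <= dotv (y - x) Fx -> 0 <= dotv (x - y) Fy -> dotv (x - y) (Fx - Fy) <= 0.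
Proof. by rewrite dotvBr -(opprB x y) dotvNl; lra. Qed.

(* [u] is the difference of two solutions of a strongly monotone variational inequality
   whose linear parts differ by [w]. *)
Lemma dotv_VI_shift (alpha : R) u w c gp gp' :
  0 <= alpha -> 0 <= dotv u (c + gp) -> 0 <= - dotv u (c + w + gp') ->
  alpha * dotv u u <= dotv u (gp' - gp) ->
  - dotv w w <= alpha * dotv w u.
Proof.
move=> a0; rewrite !dotvDr dotvNr => VI VI' mon.
have mon_uw : alpha * dotv u u <= - dotv u w by lra.
have sq := dotv_ge0 (alpha *: u + w).
rewrite !dotvDl !dotvDr !dotvZl !dotvZr (dotvC w u) in sq *.
by have := ler_wpM2l a0 mon_uw; lra.
Qed.

Lemma differentiable_dotv u x : differentiable (dotv u) x.
Proof.
have -> : dotv u = \sum_(j < n) (u 0 j *: (fun y : 'rV[R]_n => y 0 j)).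
  by apply/funext => y; rewrite fct_sumE; apply: eq_bigr => j _.
by apply: differentiable_sum => j; apply: differentiableZ; exact: differentiable_coord.
Qed.

Lemma dotv_grad (g : 'rV[R]_n -> R) x d : differentiable g x ->
  dotv d (grad g x) = 'd g x d.
Proof.
move=> dg; rewrite [in RHS](row_sum_delta d) linear_sum; apply: eq_bigr => j _.
by rewrite linearZ /= !mxE.
Qed.

End DotProduct.

Lemma mulmx_dotv (R : realType) m n (pi : 'rV[R]_m) (A : 'M[R]_(m, n)) (p : 'rV[R]_n) :
  (pi *m A *m p^T) 0 0 = dotv (pi *m A) p.
Proof. by rewrite [LHS]mxE; apply: eq_bigr => j _; rewrite [p^T _ _]mxE. Qed.

Lemma dotv_mulmx_tr (R : realType) m n (d : 'rV[R]_m) (A : 'M[R]_(m, n)) (p : 'rV[R]_n) :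
  dotv d (p *m A^T) = dotv (d *m A) p.
Proof.
rewrite /dotv; under eq_bigr do rewrite mxE mulr_sumr.
rewrite exchange_big /=; apply: eq_bigr => j _; rewrite [(d *m A) 0 j]mxE mulr_suml.
by apply: eq_bigr => i _; rewrite mxE; ring.
Qed.

Section Simplex.
Variables (R : realType) (n : nat).
Implicit Types p q : 'rV[R]_n.

Lemma simplex_ge0 p j : simplex R n p -> 0 <= p 0 j.
Proof. by case. Qed.

Lemma simplex_le1 p j : simplex R n p -> p 0 j <= 1.
Proof. by move=> [p0 <-]; rewrite (bigD1 j) //= lerDl; exact: sumr_ge0. Qed.

Lemma simplex_segment p q t : simplex R n p -> simplex R n q -> 0 <= t <= 1 ->
  simplex R n (p + t *: (q - p)).
Proof.
move=> [p0 p1] [q0 q1] /andP[t0 t1]; split=> [j|].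
  rewrite !mxE (_ : _ + _ = (1 - t) * p 0 j + t * q 0 j); last by ring.
  by rewrite addr_ge0 ?mulr_ge0 ?subr_ge0.
under eq_bigr do rewrite !mxE.
by rewrite big_split /= -mulr_sumr big_split /= sumrN p1 q1 subrr mulr0 addr0.
Qed.

Lemma simplex_closed : closed (simplex R n).
Proof.
have -> : simplex R n = (\bigcap_(j in setT) [set p : 'rV[R]_n | 0 <= p 0 j])
   `&` ((fun p : 'rV[R]_n => \sum_j p 0 j) @^-1` [set 1]).
  by apply/seteqP; split => p /= [p0 p1]; split => // j *; apply: p0.
apply: closedI.
  apply: closed_bigI => j _.
  apply: (@preimage_closed _ _ (fun p : 'rV[R]_n => p 0 j) [set x | 0 <= x]).
    by move=> x _; apply: coord_continuous.
  exact: closed_ge.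
apply: preimage_closed; last exact: closed_eq.
move=> x _; apply: differentiable_continuous.
have -> : (fun p : 'rV[R]_n => \sum_j p 0 j) = \sum_(j < n) (fun p : 'rV[R]_n => p 0 j).
  by apply/funext => p; rewrite fct_sumE.
by apply: differentiable_sum => j; apply: differentiable_coord.
Qed.

Lemma simplex_bounded : bounded_set (simplex R n).
Proof.
rewrite /= /bounded_near; near=> M => x Ax /=.
rewrite [leLHS]/Num.norm /= mx_normrE; apply: bigmax_le.
  by near: M; apply: nbhs_pinfty_ge; rewrite num_real.
move=> [i j] _ /=; rewrite (ord1 i) ger0_norm; last exact: simplex_ge0.
apply: (le_trans (simplex_le1 j Ax)).
by near: M; apply: nbhs_pinfty_ge; rewrite num_real.
Unshelve. all: by end_near.
Qed.

Lemma simplex_compact : compact (simplex R n).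
Proof. exact: bounded_closed_compact simplex_bounded simplex_closed. Qed.

End Simplex.

Lemma dotv_mulmx_le_shift (R : realType) m n (pi : 'rV[R]_m) (A A' : 'M[R]_(m, n)) p c :
  simplex R m pi -> simplex R n p -> (forall i j, A' i j <= A i j + c) ->
  dotv (pi *m A') p <= dotv (pi *m A) p + c.
Proof.
move=> [pi0 pi1] [p0 p1] leA.
have c_sum : c = \sum_j \sum_i pi 0 i * p 0 j * c.
  rewrite -[LHS]mul1r -{1}p1 mulr_suml; apply: eq_bigr => j _.
  by rewrite -!mulr_suml pi1 mul1r.
rewrite /dotv c_sum -big_split /=; apply: ler_sum => j _.
rewrite !mxE !mulr_suml -big_split /=; apply: ler_sum => i _.
by have := ler_wpM2l (mulr_ge0 (pi0 i) (p0 j)) (leA i j); rewrite mulrDr; lra.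
Qed.

Section Differentiation.
Variable R : realType.

Lemma differentiable_pair1 n m (D : 'rV[R]_n -> 'rV[R]_m -> R) p q :
  differentiable (fun z : 'rV[R]_n * 'rV[R]_m => D z.1 z.2) (p, q) ->
  differentiable (D^~ q) p.
Proof.
move=> dD; have -> : D^~ q = (fun z : 'rV[R]_n * 'rV[R]_m => D z.1 z.2) \o (fun x => (x, q)) by [].
exact: differentiable_comp.
Qed.

Lemma diff_nbhd_differentiable n (A : set 'rV[R]_n) g x :
  diff_nbhd A g -> A x -> differentiable g x.
Proof. by move=> [U [_ AU dU]] Ax; apply/dU/AU. Qed.

Lemma diff_on2_partial n (A : set 'rV[R]_n) D :
  diff_on2 A D -> forall q, A q -> forall p, A p -> differentiable (D^~ q) p.
Proof. by move=> dD q qA p pA; apply/differentiable_pair1/dD. Qed.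

Lemma diff_ge_of_quadratic_minorant n (g : 'rV[R]_n -> R) x d a K :
  differentiable g x ->
  (forall t, 0 < t < 1 -> t * a - K * t ^+ 2 <= g (x + t *: d) - g x) ->
  a <= 'd g x d.
Proof.
move=> dg gx.
have quot_cvg : (fun h : R => h^-1 *: (g (h *: d + x) - g x)) @ 0^'+ --> 'd g x d.
  by rewrite -deriveE //; exact: cvg_dnbhs_at_right (diff_derivable dg).
have lin_cvg : (fun h : R => K * h) @ 0^'+ --> K * 0.
  by apply: cvg_at_right_filter; apply: cvgM; [exact: cvg_cst | exact: cvg_id].
rewrite -[leRHS]addr0 -(mulr0 K).
apply: (closed_cvg _ (@closed_ge _ a) _ _ (cvgD quot_cvg lin_cvg)); near=> h => /=.
have h0 : 0 < h by near: h; exact: nbhs_right_gt.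
have h1 : h < 1 by near: h; exact: nbhs_right_lt.
change (a <= h^-1 * (g (h *: d + x) - g x) + K * h); rewrite [h *: d + x]addrC.
have -> : a = h^-1 * (h * a - K * h ^+ 2) + K * h by field; rewrite gt_eqF.
by rewrite lerD2r ler_pM2l ?invr_gt0 // gx // h0 h1.
Unshelve. all: by end_near.
Qed.

End Differentiation.

Section AdversaryResponse.
Variables (R : realType) (n : nat).
Implicit Types (c w p q : 'rV[R]_n) (Dq : 'rV[R]_n -> R).

(* [p] attains the supremum defining f_i when [c = pi_i R_i] and [Dq = D_i(., pi_{-i})]. *)
Definition adv_response c Dq p :=
  simplex R n p /\
  forall p', simplex R n p' -> - dotv c p' - Dq p' <= - dotv c p - Dq p.

Definition strongly_monotone_grad (alpha : R) Dq :=
  forall p p', simplex R n p -> simplex R n p' ->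
  alpha * dotv (p - p') (p - p') <= dotv (p - p') (grad Dq p - grad Dq p').

Lemma adv_response_exists c Dq : simplex R n !=set0 ->
  (forall p, simplex R n p -> {for p, continuous Dq}) ->
  exists p, adv_response c Dq p.
Proof.
move=> ne cDq.
have obj_cont : {within simplex R n, continuous (fun p => - dotv c p - Dq p)}.
  apply: continuous_in_subspaceT => p; rewrite inE => pin.
  apply: (@continuousB _ _ _ (fun p => - dotv c p) Dq); last exact: cDq.
  by apply: continuousN; apply: differentiable_continuous; exact: differentiable_dotv.
have [p pin pmax] := EVT_max_rV ne (@simplex_compact R n) obj_cont.
by exists p; split=> [|p' p'in]; [rewrite inE in pin | apply: pmax; rewrite inE].
Qed.

Lemma adv_response_VI c Dq p : adv_response c Dq p -> differentiable Dq p ->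
  forall p', simplex R n p' -> 0 <= dotv (p' - p) (c + grad Dq p).
Proof.
move=> [pin pmax] dDq p' p'in.
rewrite dotvDr dotv_grad // dotvC.
suff : - dotv c (p' - p) <= 'd Dq p (p' - p) by lra.
apply: (diff_ge_of_quadratic_minorant (K := 0)) => // t /andP[t0 t1].
have t01 : 0 <= t <= 1 by rewrite !ltW.
by have := pmax _ (simplex_segment pin p'in t01); rewrite dotvDr dotvZr; lra.
Qed.

(* The adversary's response moves by O(|w|) when its linear payoff is shifted by w. *)
Lemma adv_response_shift alpha c w Dq p p' : 0 <= alpha ->
  strongly_monotone_grad alpha Dq -> (forall x, simplex R n x -> differentiable Dq x) ->
  adv_response c Dq p -> adv_response (c + w) Dq p' ->
  - dotv w w <= alpha * dotv w (p' - p).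
Proof.
move=> a0 smon dDq rp rp'.
have VIp := adv_response_VI rp (dDq _ rp.1) rp'.1.
have VIp' := adv_response_VI rp' (dDq _ rp'.1) rp.1.
rewrite -(opprB p') dotvNl in VIp'.
exact: dotv_VI_shift a0 VIp VIp' (smon _ _ rp'.1 rp.1).
Qed.

End AdversaryResponse.

Section StageValue.
Variables (R : realType) (m n : nat) (eps : R) (nu : 'rV[R]_m -> R).
Variable D : 'rV[R]_n -> 'rV[R]_n -> R.
Hypothesis dD : forall q, simplex R n q -> forall p, simplex R n p -> differentiable (D^~ q) p.

Lemma adv_response_exists_at (c : 'rV[R]_n) q : simplex R n q ->
  exists p, adv_response c (D^~ q) p.
Proof.
move=> qin; apply: adv_response_exists; first by exists q.
by move=> p pin; exact: differentiable_continuous (dD qin pin).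
Qed.

Lemma fval_adv_response pi q (A : 'M[R]_(m, n)) p : adv_response (pi *m A) (D^~ q) p ->
  fval eps nu D pi q A = - dotv (pi *m A) p - D p q + eps * nu pi.
Proof.
move=> [pin pmax]; rewrite /fval; congr (_ + _).
set E := [set _ | _ in _]; set v := - dotv _ p - _.
have Ev : E v by exists p; rewrite ?mulmx_dotv.
have ubv : ubound E v by move=> _ [p' p'in <-]; rewrite mulmx_dotv; exact: pmax.
by apply/eqP; rewrite eq_le ge_sup ?sup_upper_bound //; [split; exists v | exists v].
Qed.

Lemma fval_le_shift pi q (A A' : 'M[R]_(m, n)) c :
  simplex R m pi -> simplex R n q -> (forall i j, A' i j <= A i j + c) ->
  fval eps nu D pi q A <= fval eps nu D pi q A' + c.
Proof.
move=> piin qin leA.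
have [p rp] := adv_response_exists_at (pi *m A) qin.
have [p' rp'] := adv_response_exists_at (pi *m A') qin.
rewrite (fval_adv_response rp) (fval_adv_response rp').
by have := rp'.2 _ rp.1; have := dotv_mulmx_le_shift piin rp.1 leA; lra.
Qed.

(* Envelope argument: perturbing pi to pi + t d moves the adversary's response by O(t)
   (adv_response_shift), so f(., q) is minorized along d by its first-order expansion
   around pi up to an O(t^2) term. *)
Lemma best_response_policy_VI alpha (A : 'M[R]_(m, n)) pi q p :
  0 < alpha -> 0 < eps -> simplex R m pi -> simplex R n q ->
  differentiable nu pi -> strongly_monotone_grad alpha (D^~ q) ->
  (forall pi', simplex R m pi' -> fval eps nu D pi q A <= fval eps nu D pi' q A) ->
  adv_response (pi *m A) (D^~ q) p ->
  forall pi', simplex R m pi' -> 0 <= dotv (pi' - pi) (- (p *m A^T) + eps *: grad nu pi).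
Proof.
move=> a0 e0 piin qin dnu smon pimin rp pi' pi'in.
set d := pi' - pi; set v := d *m A.
rewrite dotvDr dotvNr dotv_mulmx_tr dotvZr dotv_grad // -/v addrC subr_ge0 -ler_pdivrMl //.
apply: (diff_ge_of_quadratic_minorant (K := dotv v v / (alpha * eps))) => // t /andP[t0 t1].
have t01 : 0 <= t <= 1 by rewrite !ltW.
have ptin := simplex_segment piin pi'in t01.
have [pt rpt] := adv_response_exists_at ((pi + t *: d) *m A) qin.
have ptA : (pi + t *: d) *m A = pi *m A + t *: v by rewrite mulmxDl -scalemxAl.
have fle := pimin _ ptin.
rewrite (fval_adv_response rp) (fval_adv_response rpt) ptA in fle.
rewrite ptA in rpt.
have shift := adv_response_shift (ltW a0) smon (dD qin) rp rpt.
have pmax := rp.2 _ rpt.1.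
rewrite dotvDl dotvZl in fle.
rewrite !dotvZl !dotvZr in shift.
have gain : t * dotv v pt <= eps * (nu (pi + t *: d) - nu pi) by lra.
have := ler_wpM2l (ltW a0) gain.
rewrite -[pt in dotv v pt](subrK p) dotvDr.
have -> : t * (eps^-1 * dotv v p) - dotv v v / (alpha * eps) * t ^+ 2
    = (alpha * eps)^-1 * (alpha * t * dotv v p - t ^+ 2 * dotv v v).
  by field; rewrite !gt_eqF.
rewrite ler_pdivrMl ?mulr_gt0 // expr2; lra.
Qed.

Lemma best_response_VI alpha (A : 'M[R]_(m, n)) pi q :
  0 < alpha -> 0 < eps -> simplex R m pi -> simplex R n q ->
  differentiable nu pi -> strongly_monotone_grad alpha (D^~ q) ->
  (forall pi', simplex R m pi' -> fval eps nu D pi q A <= fval eps nu D pi' q A) ->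
  exists2 p, simplex R n p &
    (forall p', simplex R n p' -> 0 <= dotv (p' - p) (pi *m A + grad (D^~ q) p)) /\
    (forall pi', simplex R m pi' -> 0 <= dotv (pi' - pi) (- (p *m A^T) + eps *: grad nu pi)).
Proof.
move=> a0 e0 piin qin dnu smon pimin.
have [p rp] := adv_response_exists_at (pi *m A) qin.
exists p; first exact: rp.1.
split; first exact: adv_response_VI rp (dD qin rp.1).
exact: best_response_policy_VI a0 e0 piin qin dnu smon pimin rp.
Qed.

End StageValue.

Section StageEquilibrium.
Variables (R : realType) (m1 m2 : nat) (G : stage_params R m1 m2) (alpha : R).
Hypotheses (eps1_gt0 : 0 < eps1 G) (eps2_gt0 : 0 < eps2 G).
Hypotheses (dnu1 : diff_nbhd (simplex R m1) (nu1 G)) (dnu2 : diff_nbhd (simplex R m2) (nu2 G)).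
Hypotheses (dD1 : diff_on2 (simplex R m2) (D1 G)) (dD2 : diff_on2 (simplex R m1) (D2 G)).
Hypotheses (alpha_gt0 : 0 < alpha) (smon : strongly_monotone G alpha).

Lemma strongly_monotone_D1 x q : simplex R m1 x -> simplex R m2 q ->
  strongly_monotone_grad alpha (D1 G ^~ q).
Proof.
move=> xin qin p p' pin p'in.
have := smon 0 0 xin qin pin xin xin qin p'in xin.
cbv beta iota delta [Fop]; rewrite (subrr x) (subrr q) !dotv0l mulmx0.
by move: (grad (D1 G ^~ q) p) (grad (D1 G ^~ q) p') => gp gp'; rewrite !add0r ?addr0 => mon.
Qed.

Lemma strongly_monotone_D2 x q : simplex R m2 x -> simplex R m1 q ->
  strongly_monotone_grad alpha (D2 G ^~ q).
Proof.
move=> xin qin p p' pin p'in.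
have := smon 0 0 qin xin xin pin qin xin xin p'in.
cbv beta iota delta [Fop]; rewrite (subrr x) (subrr q) !dotv0l mulmx0.
by move: (grad (D2 G ^~ q) p) (grad (D2 G ^~ q) p') => gp gp'; rewrite !add0r ?addr0 => mon.
Qed.

Lemma best_response1_VI (R1 : 'M[R]_(m1, m2)) x1 x2 :
  simplex R m1 x1 -> simplex R m2 x2 ->
  (forall y, simplex R m1 y -> f1 G x1 x2 R1 <= f1 G y x2 R1) ->
  exists2 p, simplex R m2 p &
    (forall p', simplex R m2 p' -> 0 <= dotv (p' - p) (x1 *m R1 + grad (D1 G ^~ x2) p)) /\
    (forall y, simplex R m1 y -> 0 <= dotv (y - x1) (- (p *m R1^T) + eps1 G *: grad (nu1 G) x1)).
Proof.
move=> x1in x2in x1min; apply: (best_response_VI (diff_on2_partial dD1) (alpha := alpha)) => //.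
- exact: diff_nbhd_differentiable dnu1 x1in.
- exact: strongly_monotone_D1 x1in x2in.
Qed.

Lemma best_response2_VI (R2 : 'M[R]_(m2, m1)) x1 x2 :
  simplex R m1 x1 -> simplex R m2 x2 ->
  (forall y, simplex R m2 y -> f2 G x2 x1 R2 <= f2 G y x1 R2) ->
  exists2 p, simplex R m1 p &
    (forall p', simplex R m1 p' -> 0 <= dotv (p' - p) (x2 *m R2 + grad (D2 G ^~ x1) p)) /\
    (forall y, simplex R m2 y -> 0 <= dotv (y - x2) (- (p *m R2^T) + eps2 G *: grad (nu2 G) x2)).
Proof.
move=> x1in x2in x2min; apply: (best_response_VI (diff_on2_partial dD2) (alpha := alpha)) => //.
- exact: diff_nbhd_differentiable dnu2 x2in.
- exact: strongly_monotone_D2 x2in x1in.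
Qed.

Lemma isRQE_unique (R1 : 'M[R]_(m1, m2)) (R2 : 'M[R]_(m2, m1)) a1 a2 b1 b2 :
  isRQE G R1 R2 a1 a2 -> isRQE G R1 R2 b1 b2 -> a1 = b1 /\ a2 = b2.
Proof.
move=> [a1in a2in a1min a2min] [b1in b2in b1min b2min].
have [p1a p1ain [VIp1a VIa1]] := best_response1_VI a1in a2in a1min.
have [p1b p1bin [VIp1b VIb1]] := best_response1_VI b1in b2in b1min.
have [p2a p2ain [VIp2a VIa2]] := best_response2_VI a1in a2in a2min.
have [p2b p2bin [VIp2b VIb2]] := best_response2_VI b1in b2in b2min.
have := smon R1 R2 a1in a2in p1ain p2ain b1in b2in p1bin p2bin; cbv beta iota delta [Fop].
have := dotv_VI2_le0 (VIa1 _ b1in) (VIb1 _ a1in).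
have := dotv_VI2_le0 (VIa2 _ b2in) (VIb2 _ a2in).
have := dotv_VI2_le0 (VIp1a _ p1bin) (VIp1b _ p1ain).
have := dotv_VI2_le0 (VIp2a _ p2bin) (VIp2b _ p2ain).
move=> le4 le3 le2 le1 mon.
have : dotv (a1 - b1) (a1 - b1) + dotv (a2 - b2) (a2 - b2)
    + dotv (p1a - p1b) (p1a - p1b) + dotv (p2a - p2b) (p2a - p2b) <= 0.
  by rewrite -(pmulr_rle0 _ alpha_gt0); lra.
have := dotv_ge0 (a1 - b1); have := dotv_ge0 (a2 - b2).
have := dotv_ge0 (p1a - p1b); have := dotv_ge0 (p2a - p2b).
move=> ge4 ge3 ge2 ge1 sum_le0.
by split; apply/eqP; rewrite -subr_eq0 -dotv_eq0 eq_le dotv_ge0 andbT; lra.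
Qed.

Lemma rqe_pairE (R1 : 'M[R]_(m1, m2)) (R2 : 'M[R]_(m2, m1)) a1 a2 :
  isRQE G R1 R2 a1 a2 -> rqe_pair G R1 R2 = (a1, a2).
Proof.
move=> rqe_a; rewrite /rqe_pair; case: pselect => [ex|[]]; last by exists (a1, a2).
by case: (cid ex) => -[b1 b2] /= /(isRQE_unique rqe_a) [<- <-].
Qed.

End StageEquilibrium.

Section RobustExpectation.
Variables (R : realType) (S : finType).
Implicit Types (P : S -> R) (W : S -> R).

Lemma expect_le_shift P W W' c : distr R S P -> (forall s, W' s <= W s + c) ->
  expect P W' <= expect P W + c.
Proof.
move=> [P0 P1] leW; rewrite /expect -[c]mul1r -P1 mulr_suml -big_split /=.
by apply: ler_sum => s _; rewrite -mulrDr ler_wpM2l.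
Qed.

Lemma expect_ge P W : distr R S P -> - \sum_s `|W s| <= expect P W.
Proof.
move=> dP; have := @expect_le_shift P W (fun=> - \sum_s `|W s|) 0 dP.
rewrite addr0 {1}/expect -mulr_suml dP.2 mul1r; apply=> s.
rewrite addr0 lerNl (le_trans (ler_norm _)) // normrN (bigD1 s) //= lerDl.
exact: sumr_ge0.
Qed.

Lemma robust_exp_le_shift (Denv : (S -> R) -> (S -> R) -> R) P0 W W' c :
  distr R S P0 -> (forall P1 P2, distr R S P1 -> distr R S P2 -> 0 <= Denv P1 P2) ->
  (forall s, W' s <= W s + c) ->
  robust_exp Denv P0 W' <= robust_exp Denv P0 W + c.
Proof.
move=> dP0 Denv_ge0 leW; rewrite /robust_exp -lerBlDr.
have lb : has_lbound [set expect Pt W' + Denv Pt P0 | Pt in distr R S].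
  exists (- \sum_s `|W' s|) => _ [Pt dPt <-].
  by have := expect_ge W' dPt; have := Denv_ge0 _ _ dPt dP0; lra.
apply: lb_le_inf => [|_ [Pt dPt <-]]; first by exists (expect P0 W + Denv P0 P0), P0.
have : inf [set expect Pt W' + Denv Pt P0 | Pt in distr R S] <= expect Pt W' + Denv Pt P0.
  by apply: ge_inf => //; exists Pt.
by have := expect_le_shift dPt leW; lra.
Qed.

End RobustExpectation.

Section PolicyEvaluation.
Variables (R : realType) (S : finType) (m1 m2 : nat).
Local Notation qfun := (S -> 'I_m1 -> 'I_m2 -> R).
Variables (rew : qfun) (g : R) (Denv : (S -> R) -> (S -> R) -> R).
Variable tr : S -> 'I_m1 -> 'I_m2 -> S -> R.
Hypotheses (g01 : 0 <= g < 1) (tr_distr : forall s a1 a2, distr R S (tr s a1 a2)).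
Hypothesis Denv_ge0 : forall P1 P2, distr R S P1 -> distr R S P2 -> 0 <= Denv P1 P2.

Definition evaluates (F : S -> qfun -> R) (V : S -> R) (Q : qfun) :=
  (forall s, V s = - F s Q) /\
  (forall s a1 a2, Q s a1 a2 = rew s a1 a2 + g * robust_exp Denv (tr s a1 a2) V).

Definition antitone_nonexpansive (F : S -> qfun -> R) :=
  forall s (Q Q' : qfun) c, (forall s a1 a2, Q' s a1 a2 <= Q s a1 a2 + c) ->
  F s Q <= F s Q' + c.

(* A discounted maximum principle: the largest gap max_s (V' s - V s) is at most g times itself. *)
Lemma evaluates_le F F' V Q V' Q' : antitone_nonexpansive F' ->
  evaluates F V Q -> evaluates F' V' Q' -> (forall s, F s Q <= F' s Q) ->
  forall s, V' s <= V s.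
Proof.
move=> F'ne [VE QE] [V'E Q'E] FleF'; have /andP[g0 g1] := g01.
pose d := \big[Order.max/0]_s (V' s - V s).
have d0 : 0 <= d by exact: bigmax_ge_id.
have V'le s : V' s <= V s + d by rewrite -lerBlDl; exact: le_bigmax.
have Q'le s a1 a2 : Q' s a1 a2 <= Q s a1 a2 + g * d.
  by rewrite QE Q'E -addrA lerD2l -mulrDr ler_wpM2l // robust_exp_le_shift.
have gap s : V' s - V s <= g * d.
  by rewrite VE V'E; have := F'ne s _ _ _ Q'le; have := FleF' s; lra.
have d_le : d <= g * d by apply: bigmax_le => //; exact: mulr_ge0.
have d_le0 : d <= 0.
  by rewrite -(@pmulr_rle0 _ (1 - g)) ?subr_gt0 // mulrBl mul1r subr_le0.
by move=> s; have := V'le s; lra.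
Qed.

Lemma evaluates_unique F V Q V' Q' : antitone_nonexpansive F ->
  evaluates F V Q -> evaluates F V' Q' -> Q = Q'.
Proof.
move=> Fne ev ev'.
have VE : V = V'.
  apply/funext => s; apply/eqP; rewrite eq_le.
  by rewrite (evaluates_le Fne ev' ev) ?(evaluates_le Fne ev ev').
by apply/funext => s; apply/funext => a1; apply/funext => a2; rewrite ev.2 ev'.2 VE.
Qed.

Lemma evaluates_deviation_le F F' Vs Qs V Q V' Q' :
  antitone_nonexpansive F -> antitone_nonexpansive F' ->
  evaluates F Vs Qs -> evaluates F V Q -> evaluates F' V' Q' ->
  (forall s, F s Qs <= F' s Qs) -> forall s, V' s <= V s.
Proof.
move=> Fne F'ne evs ev ev'; rewrite (evaluates_unique Fne evs ev).
exact: evaluates_le F'ne ev ev'.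
Qed.

End PolicyEvaluation.

Section MarkovGame.
Variables (R : realType) (S : finType) (m1 m2 : nat).
Variables (G : stage_params R m1 m2) (M : markov_params R S m1 m2).

Lemma f1_antitone_nonexpansive pi1 pi2 : markov_policy pi1 -> markov_policy pi2 ->
  diff_on2 (simplex R m2) (D1 G) ->
  antitone_nonexpansive (fun s (Q : S -> 'I_m1 -> 'I_m2 -> R) =>
    f1 G (pi1 s) (pi2 s) (Qmat1 Q s)).
Proof.
move=> pol1 pol2 dD1 s Q Q' c leQ.
by apply: (fval_le_shift _ _ (diff_on2_partial dD1) (pol1 s) (pol2 s)) => i j; rewrite !mxE.
Qed.

Lemma f2_antitone_nonexpansive pi1 pi2 : markov_policy pi1 -> markov_policy pi2 ->
  diff_on2 (simplex R m1) (D2 G) ->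
  antitone_nonexpansive (fun s (Q : S -> 'I_m1 -> 'I_m2 -> R) =>
    f2 G (pi2 s) (pi1 s) (Qmat2 Q s)).
Proof.
move=> pol1 pol2 dD2 s Q Q' c leQ.
by apply: (fval_le_shift _ _ (diff_on2_partial dD2) (pol2 s) (pol1 s)) => i j; rewrite !mxE.
Qed.

Lemma bellman_fixpoint_evaluates Q1 Q2 pi1 pi2 :
  bellman G M Q1 Q2 = (Q1, Q2) ->
  (forall s, rqe_pair G (Qmat1 Q1 s) (Qmat2 Q2 s) = (pi1 s, pi2 s)) ->
  is_VQ1 G M pi1 pi2 (fun s => - f1 G (pi1 s) (pi2 s) (Qmat1 Q1 s)) Q1 /\
  is_VQ2 G M pi1 pi2 (fun s => - f2 G (pi2 s) (pi1 s) (Qmat2 Q2 s)) Q2.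
Proof.
move=> fix_Q rqeE; split; split=> // s a1 a2.
- have := congr1 (fun Q => Q.1 s a1 a2) fix_Q; rewrite /bellman /= => <-.
  by congr (_ + _ * robust_exp _ _ _); apply/funext => s'; rewrite /RQE1 rqeE.
- have := congr1 (fun Q => Q.2 s a1 a2) fix_Q; rewrite /bellman /= => <-.
  by congr (_ + _ * robust_exp _ _ _); apply/funext => s'; rewrite /RQE2 rqeE.
Qed.

End MarkovGame.

Unset Implicit Arguments. Set Strict Implicit.

Theorem proposition3 (R : realType) (S : finType) (m1 m2 : nat)
  (G : stage_params R m1 m2) (M : markov_params R S m1 m2) (alpha : R)
  (Qs1 Qs2 : S -> 'I_m1 -> 'I_m2 -> R)
  (pis1 : S -> 'rV[R]_m1) (pis2 : S -> 'rV[R]_m2) :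
  (* rewards in [0,1], discount in [0,1), transition kernel in Delta_S *)
  (forall s a1 a2, 0 <= rew1 M s a1 a2 <= 1) ->
  (forall s a1 a2, 0 <= rew2 M s a1 a2 <= 1) ->
  0 <= gamma M < 1 ->
  (forall s a1 a2, distr R S (trans M s a1 a2)) ->
  (* environment penalties are nonnegative *)
  (forall P1 P2, distr R S P1 -> distr R S P2 -> 0 <= Denv1 M P1 P2) ->
  (forall P1 P2, distr R S P1 -> distr R S P2 -> 0 <= Denv2 M P1 P2) ->
  (* stage-game regularisers *)
  0 < eps1 G -> 0 < eps2 G ->
  diff_nbhd (simplex R m1) (nu1 G) -> strictly_convex_on (simplex R m1) (nu1 G) ->
  diff_nbhd (simplex R m2) (nu2 G) -> strictly_convex_on (simplex R m2) (nu2 G) ->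
  diff_on2 (simplex R m2) (D1 G) -> convex_first_on (simplex R m2) (D1 G) ->
  diff_on2 (simplex R m1) (D2 G) -> convex_first_on (simplex R m1) (D2 G) ->
  (* the modified 4-player game is alpha-strongly monotone *)
  0 < alpha -> strongly_monotone G alpha ->
  (* Q* is the unique fixed point of the Bellman operator T *)
  bellman G M Qs1 Qs2 = (Qs1, Qs2) ->
  (forall Q1 Q2, bellman G M Q1 Q2 = (Q1, Q2) -> Q1 = Qs1 /\ Q2 = Qs2) ->
  (* pi*(. | s) is the (unique) RQE of the stage game Q*(s, .) *)
  (forall s, isRQE G (Qmat1 Qs1 s) (Qmat2 Qs2 s) (pis1 s) (pis2 s)) ->
  markov_RQE G M pis1 pis2.
Proof.
move=> _ _ g01 tr_distr Denv1_ge0 Denv2_ge0 e1 e2 dnu1 _ dnu2 _ dD1 _ dD2 _ a0 smon fix_Q _ rqe.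
have pol1 : markov_policy pis1 by move=> s; case: (rqe s).
have pol2 : markov_policy pis2 by move=> s; case: (rqe s).
have rqeE s : rqe_pair G (Qmat1 Qs1 s) (Qmat2 Qs2 s) = (pis1 s, pis2 s) :=
  rqe_pairE e1 e2 dnu1 dnu2 dD1 dD2 a0 smon (rqe s).
have [ev1 ev2] := bellman_fixpoint_evaluates fix_Q rqeE.
split; [exact: pol1 | split; [exact: pol2 | split]].
- move=> pi1 pol1' V Q V' Q' ev ev'.
  apply: (evaluates_deviation_le g01 tr_distr Denv1_ge0 _ _ ev1 ev ev').
  + exact: f1_antitone_nonexpansive pol1 pol2 dD1.
  + exact: f1_antitone_nonexpansive pol1' pol2 dD1.
  + by move=> s; case: (rqe s) => _ _ + _; apply.
- move=> pi2 pol2' V Q V' Q' ev ev'.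
  apply: (evaluates_deviation_le g01 tr_distr Denv2_ge0 _ _ ev2 ev ev').
  + exact: f2_antitone_nonexpansive pol1 pol2 dD2.
  + exact: f2_antitone_nonexpansive pol1 pol2' dD2.
  + by move=> s; case: (rqe s) => _ _ _; apply.
Qed.
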